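(* For every positive integer $n$, the morphism $\mathrm{Hank}_n\times\phi_n:\mathcal{F}_n\to\mathcal{H}_n\times\mathbf{A}^1$ is a $\mathbf{G}_a$-equivariant isomorphism of schemes.
   Context: Let $k$ be a field; schemes are over $k$. For a $k$-algebra $R$, $\mathcal{F}_n(R)$ is the set of pairs $(A,B)$ of polynomials in $R[X]$ with $A$ monic of degree $n$, $\deg B<n$, $\mathrm{res}_{n,n}(A,B)\in R^\times$. $\mathcal{H}_n$ is the closed subscheme of non-degenerate symmetric $n\times n$ matrices consisting of Hankel matrices (entries $s_{p,q}$ depending only on $p+q$). Bézout form: writing $\frac{A(X)B(Y)-A(Y)B(X)}{X-Y}=\sum_{1\le p,q\le n}c_{p,q}X^{p-1}Y^{q-1}$, $\mathrm{B\acute{e}z}_n(A,B)=[c_{p,q}]$, an invertible symmetric matrix; $\mathrm{Hank}_n(A,B):=\mathrm{B\acute{e}z}_n(A,B)^{-1}$, which is a Hankel matrix. $\phi_n(A,B)$ is the opposite of the coefficient of $X^{n-1}$ in $V_1$, where $(U_1,V_1)$ is the unique pair of polynomials with $\deg U_1=n-1$, $\deg V_1\le n-1$, $AU_1+BV_1=X^{2n-1}$. $\mathbf{G}_a$ acts on $\mathcal{F}_n$ by $h\cdot\frac{A}{B}=\frac{A+hB}{B}$, trivially on $\mathcal{H}_n$, and by translation on $\mathbf{A}^1$. *)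

(* Affine schemes are handled through their functor of points
   on commutative k-algebras. *)
From HB Require Import structures.
From mathcomp Require Import all_boot all_order all_algebra.
From Stdlib Require Import ClassicalEpsilon.
Set Implicit Arguments.
Unset Strict Implicit.
Unset Printing Implicit Defensive.
Import Order.TTheory GRing.Theory Num.Theory.
Local Open Scope ring_scope.

Section Defs.
Variable R : comUnitRingType.

Definition sylv_nn (n : nat) (A B : {poly R}) : 'M[R]_(n + n) :=
  \matrix_(i < n + n, j < n + n)
    match split i with
    | inl i' => ('X^i' * A)`_j
    | inr i' => ('X^i' * B)`_j
    end.

Definition res_nn (n : nat) (A B : {poly R}) : R := \det (sylv_nn n A B).

Definition inF (n : nat) (A B : {poly R}) : Prop :=
  [/\ A \is monic, size A = n.+1, (size B <= n)%N & res_nn n A B \is a GRing.unit].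

(* Bivariate polynomials: {poly {poly R}}, outer variable X, inner variable Y.
   A(X) = A^:P, A(Y) = A%:P. *)
Definition bez_num (A B : {poly R}) : {poly {poly R}} :=
  A^:P * B%:P - A%:P * B^:P.

(* (A(X)B(Y) - A(Y)B(X)) / (X - Y), exact division by a monic polynomial *)
Definition bez_quot (A B : {poly R}) : {poly {poly R}} :=
  Pdiv.CommonRing.rdivp (bez_num A B) ('X - ('X)%:P).

(* Bez_n(A,B) = [c_{p,q}], c_{p,q} the coefficient of X^(p-1) Y^(q-1)
   (0-indexed here: entry (p,q) is the coefficient of X^p Y^q). *)
Definition Bez (n : nat) (A B : {poly R}) : 'M[R]_n :=
  \matrix_(p < n, q < n) ((bez_quot A B)`_p)`_q.

Definition Hank (n : nat) (A B : {poly R}) : 'M[R]_n := invmx (Bez n A B).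

Definition is_hankel (n : nat) (M : 'M[R]_n) : Prop :=
  forall p q p' q' : 'I_n, (p + q = p' + q')%N -> M p q = M p' q'.

Definition inH (n : nat) (M : 'M[R]_n) : Prop :=
  [/\ M^T = M, M \in unitmx & is_hankel M].

(* The pair (U_1, V_1): deg U_1 = n-1 (i.e. size n), deg V_1 <= n-1,
   A U_1 + B V_1 = X^(2n-1).  Chosen by Hilbert's epsilon; it is unique on F_n. *)
Definition UV1_spec (n : nat) (A B : {poly R}) (UV : {poly R} * {poly R}) : Prop :=
  [/\ size UV.1 = n, (size UV.2 <= n)%N & A * UV.1 + B * UV.2 = 'X^((n + n).-1)].

Definition UV1 (n : nat) (A B : {poly R}) : {poly R} * {poly R} :=
  epsilon (inhabits (0, 0)) (UV1_spec n A B).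

Definition phi (n : nat) (A B : {poly R}) : R := - (UV1 n A B).2`_n.-1.

End Defs.

(* For monic A of degree n let tau(g) be the coefficient of X^(n-1) in g mod A.
   If B C = 1 mod A, the Bezout matrix of (A, B) is inverse to the Hankel matrix
   of the sequence s_k = tau(X^k C), and phi(A, B) = - s_(2n-1); moreover s
   satisfies the linear recurrence with characteristic polynomial A. So
   Hank x phi records exactly s_0, ..., s_(2n-1). Conversely, 2n terms with an
   invertible Hankel matrix determine A (solve for the recurrence), C mod A (from
   s_0, ..., s_(n-1)) and hence B, the inverse of C mod A; and each of these steps
   can be run backwards to reach any point of H_n x A^1. Replacing A by A + hB
   leaves the Bezoutian unchanged and changes V_1 by -hU_1, whose coefficient of
   X^(n-1) is 1. *)

From HB Require Import structures.
From mathcomp Require Import all_boot all_order all_algebra.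
From mathcomp Require Import ring zify.
From Stdlib Require Import ClassicalEpsilon.
Import GRing.Theory Pdiv.Ring Pdiv.RingMonic.
Local Open Scope ring_scope.
Set Implicit Arguments.
Unset Strict Implicit.

Section PolySize.
Variable R : comUnitRingType.
Implicit Types A D f g : {poly R}.

Lemma monic_coef_size n A : A \is monic -> size A = n.+1 -> A`_n = 1.
Proof. by move=> /monicP + sA; rewrite /lead_coef sA. Qed.

Lemma sum_coefX f m : (size f <= m)%N -> \sum_(q < m) f`_q *: 'X^q = f.
Proof.
move=> hf; rewrite -poly_def; apply/polyP => i; rewrite coef_poly.
by case: ltnP => // hi; rewrite nth_default // (leq_trans hf hi).
Qed.

Lemma size_sumX m (c : 'I_m -> R) : (size (\sum_(i < m) c i *: 'X^i)%R <= m)%N.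
Proof.
apply/leq_sizeP => j hj; rewrite coef_sum big1 // => i _.
rewrite coefZ coefXn (_ : (j == i) = false) ?mulr0 //; apply/negbTE.
by rewrite neq_ltn (leq_trans (ltn_ord i) hj) orbT.
Qed.

Lemma coef_sumX m (c : 'I_m -> R) (i : 'I_m) : (\sum_(k < m) c k *: 'X^k)`_i = c i.
Proof.
rewrite coef_sum (bigD1 i) //= coefZ coefXn eqxx mulr1 big1 ?addr0 // => k ki.
by rewrite coefZ coefXn val_eqE eq_sym (negbTE ki) mulr0.
Qed.

Lemma size_polyB_leq f g m :
  (size f <= m)%N -> (size g <= m)%N -> (size (f - g)%R <= m)%N.
Proof.
by move=> hf hg; apply: leq_trans (size_polyD _ _) _; rewrite size_polyN geq_max hf.
Qed.

Lemma size_polyCM_leq c f m : (size f <= m)%N -> (size (c%:P * f)%R <= m)%N.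
Proof.
move=> hf; apply: leq_trans (size_polyMleq _ _) _.
by have := size_polyC_leq1 c; move: hf; move: (size f) (size c%:P) => a b; lia.
Qed.

Lemma mul_monic_small_eq0 n A D :
  A \is monic -> size A = n.+1 -> (size (D * A)%R <= n)%N -> D = 0.
Proof.
move=> mA sA; apply: contraTeq => D0; rewrite size_Mmonic // sA -ltnNge.
by move: D0; rewrite -size_poly_gt0; move: (size D) => d; lia.
Qed.

End PolySize.

Section Bezoutian.
Variable R : comUnitRingType.
Implicit Types A B f : {poly R}.

(* (f(X) - f(Y)) / (X - Y), with X the outer variable *)
Definition divdiff f : {poly {poly R}} := \poly_(p < size f) drop_poly p.+1 f.

Lemma coef_divdiff f p : (divdiff f)`_p = drop_poly p.+1 f.
Proof.
rewrite /divdiff coef_poly; case: ltnP => // h.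
by rewrite drop_poly_eq0 // (leq_trans h).
Qed.

Lemma divdiffP f : ('X - ('X)%:P) * divdiff f = f^:P - f%:P.
Proof.
apply/polyP => p; apply/polyP => j.
rewrite mulrBl !coefD !coefN coefXM coefCM coef_divdiff coef_map /= !coefC.
case: p => [|p] /=.
  rewrite coef0 coefXM coef_divdiff coef_drop_poly.
  by case: j => [|j] /=; rewrite ?subrr ?sub0r ?addn1.
rewrite coef_divdiff coefXM !coef_drop_poly coef0.
case: j => [|j] /=; rewrite ?add0n ?subr0 ?sub0r //.
by rewrite addSn -addnS subrr.
Qed.

Definition bez_row A B p := B * drop_poly p.+1 A - A * drop_poly p.+1 B.

Lemma coef_bez_quot A B p : (bez_quot A B)`_p = bez_row A B p.
Proof.
have e : bez_num A B = (B%:P * divdiff A - A%:P * divdiff B) * ('X - ('X)%:P).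
  by rewrite mulrBl -!mulrA ![divdiff _ * _]mulrC !divdiffP /bez_num; ring.
by rewrite /bez_quot e rdivp_mull ?monicXsubC // coefB !coefCM !coef_divdiff.
Qed.

Lemma size_bez_row n A B p : size A = n.+1 -> (size B <= n)%N -> (p < n)%N ->
  (size (bez_row A B p) <= n)%N.
Proof.
move=> sA sB pn.
have -> : bez_row A B p =
    drop_poly p.+1 A * take_poly p.+1 B - take_poly p.+1 A * drop_poly p.+1 B.
  rewrite /bez_row -[X in _ - X * _](poly_take_drop p.+1 A).
  by rewrite -[X in X * drop_poly _ A](poly_take_drop p.+1 B); ring.
apply: size_polyB_leq; apply: leq_trans (size_polyMleq _ _) _.
  by have := size_take_poly p.+1 B; rewrite size_drop_poly sA; lia.
have := size_take_poly p.+1 A; rewrite size_drop_poly.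
by move: sB pn; move: (size (take_poly _ _)) (size B) => a b; lia.
Qed.

Lemma bez_num_shift A B h : bez_num (A + h%:P * B) B = bez_num A B.
Proof.
rewrite /bez_num rmorphD rmorphM /= map_polyC /= rmorphD rmorphM /=.
by move: (h%:P%:P) => c; ring.
Qed.

End Bezoutian.

Section HankelMatrices.
Variable R : comUnitRingType.
Implicit Types (A : {poly R}) (s : nat -> R).

Definition hankel_mx n s : 'M[R]_n := \matrix_(p < n, q < n) s (p + q)%N.

Lemma hankel_mxE n s p q : hankel_mx n s p q = s (p + q)%N.
Proof. exact: mxE. Qed.

Lemma hankel_mx_inH n s : hankel_mx n s \in unitmx -> inH (hankel_mx n s).
Proof.
split=> //; first by apply/matrixP => p q; rewrite !mxE addnC.
by move=> p q p' q' e; rewrite !mxE e.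
Qed.

Lemma eq_hankel_mx n s s' : (forall k, (k < (n + n).-1)%N -> s k = s' k) ->
  hankel_mx n s = hankel_mx n s'.
Proof.
move=> e; apply/matrixP => p q; rewrite !mxE e //.
by have := ltn_ord p; have := ltn_ord q; lia.
Qed.

Lemma hankel_mx_inj n s s' : hankel_mx n s = hankel_mx n s' ->
  forall k, (k < (n + n).-1)%N -> s k = s' k.
Proof.
move=> e k hk.
have hp : (minn k n.-1 < n)%N by lia.
have hq : (k - minn k n.-1 < n)%N by lia.
have := congr1 (fun M : 'M[R]_n => M (Ordinal hp) (Ordinal hq)) e.
by rewrite !mxE /= subnKC ?geq_minl.
Qed.

Definition annihilates n A s m := forall k, (k < m)%N ->
  s (k + n)%N = - \sum_(j < n) A`_j * s (k + j)%N.

Lemma eq_annihilates n A s s' m : (forall k, (k < m + n)%N -> s k = s' k) ->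
  annihilates n A s m -> annihilates n A s' m.
Proof.
move=> e hs k hk; rewrite -e ?hs //; last by lia.
congr (- _); apply: eq_bigr => j _; rewrite e //; have := ltn_ord j; lia.
Qed.

(* the entry of H on the antidiagonal p + q = k (0 if k >= 2n - 1) *)
Definition hankel_diag n (H : 'M[R]_n) k :=
  if [pick pq : 'I_n * 'I_n | (pq.1 + pq.2 == k)%N] is Some pq
  then H pq.1 pq.2 else 0.

Lemma is_hankelE n (H : 'M[R]_n) : is_hankel H -> H = hankel_mx n (hankel_diag H).
Proof.
move=> hH; apply/matrixP => p q; rewrite hankel_mxE /hankel_diag.
case: pickP => [pq /eqP e | /(_ (p, q))]; last by rewrite eqxx.
by apply: hH; rewrite e.
Qed.

Lemma hankel_mx_mul_coefs n A s : annihilates n A s n ->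
  hankel_mx n s *m \col_(j < n) A`_j = \col_(k < n) - s (k + n)%N.
Proof.
move=> hA; apply/matrixP => k i; rewrite !mxE hA // opprK.
by apply: eq_bigr => j _; rewrite !mxE mulrC.
Qed.

Lemma monic_annihilator_uniq n A A' s :
  A \is monic -> size A = n.+1 -> A' \is monic -> size A' = n.+1 ->
  hankel_mx n s \in unitmx -> annihilates n A s n -> annihilates n A' s n ->
  A = A'.
Proof.
move=> mA sA mA' sA' Hu hA hA'.
have ecol : \col_(j < n) A`_j = \col_(j < n) A'`_j :> 'cV_n.
  rewrite -[LHS](mulKmx Hu) (hankel_mx_mul_coefs hA).
  by rewrite -(hankel_mx_mul_coefs hA') mulKmx.
apply/polyP => j; case: (ltngtP j n) => hj.
- by have := congr1 (fun M : 'cV[R]_n => M (Ordinal hj) ord0) ecol; rewrite !mxE.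
- by rewrite !nth_default ?sA ?sA'.
- by rewrite hj (monic_coef_size mA sA) (monic_coef_size mA' sA').
Qed.

Lemma monic_annihilator_exists n s : hankel_mx n s \in unitmx ->
  exists A, [/\ A \is monic, size A = n.+1 & annihilates n A s n].
Proof.
move=> Hu; pose v := \col_(k < n) - s (k + n)%N.
pose a := invmx (hankel_mx n s) *m v.
pose A := 'X^n + \sum_(j < n) a j 0 *: 'X^j.
have sS := size_sumX (fun j : 'I_n => a j 0).
have sA : size A = n.+1 by rewrite size_polyDl size_polyXn // ltnS.
exists A; split => //.
  by rewrite monicE /A lead_coefDl ?lead_coefXn // size_polyXn ltnS.
move=> k hk.
have cA (j : 'I_n) : A`_j = a j 0.
  by rewrite /A coefD coefXn coef_sumX ltn_eqF ?add0r.
have := congr1 (fun M : 'cV[R]_n => M (Ordinal hk) ord0) (mulKVmx Hu v).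
rewrite !mxE /= => e; rewrite -[s _]opprK -e; congr (- _).
by apply: eq_bigr => j _; rewrite cA hankel_mxE mulrC.
Qed.

End HankelMatrices.

Section ResidueForm.
Variable R : comUnitRingType.
Variables (n : nat) (A : {poly R}).
Hypotheses (mA : A \is monic) (sA : size A = n.+1).
Implicit Types B C D E W g h : {poly R}.

Definition tau g := (rmodp g A)`_n.-1.

Lemma tau_small g : (size g <= n)%N -> tau g = g`_n.-1.
Proof. by move=> h; rewrite /tau rmodp_small // sA ltnS. Qed.

Lemma tauD g h : tau (g + h) = tau g + tau h.
Proof. by rewrite /tau rmodpD // coefD. Qed.

Lemma tauN g : tau (- g) = - tau g.
Proof. by rewrite /tau rmodpN // coefN. Qed.

Lemma tauB g h : tau (g - h) = tau g - tau h.
Proof. by rewrite tauD tauN. Qed.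

Lemma tauZ c g : tau (c *: g) = c * tau g.
Proof. by rewrite /tau rmodpZ // coefZ. Qed.

Lemma tau_sum m (F : 'I_m -> {poly R}) :
  tau (\sum_(i < m) F i) = \sum_(i < m) tau (F i).
Proof.
elim/big_rec2: _ => [|i y1 y2 _ <-]; last by rewrite tauD.
by rewrite tau_small ?coef0 // size_poly0.
Qed.

Lemma tau_mull g : tau (g * A) = 0.
Proof. by rewrite /tau rmodp_mull // coef0. Qed.

Lemma tau_add_mull g h : tau (g + h * A) = tau g.
Proof. by rewrite tauD tau_mull addr0. Qed.

Lemma tau_XnM_drop p r : (p < n)%N -> (r < n)%N ->
  tau ('X^r * drop_poly p.+1 A) = (p == r)%:R.
Proof.
move=> pn rn; case: (leqP r p) => rp.
  rewrite tau_small; last first.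
    apply: leq_trans (size_polyMleq _ _) _.
    by rewrite size_polyXn size_drop_poly sA; lia.
  rewrite coefXnM ltnNge (_ : (r <= n.-1)%N) /=; last by lia.
  rewrite coef_drop_poly; case: (eqVneq p r) => [->|prn].
    by rewrite (_ : (n.-1 - r + r.+1 = n)%N) ?(monic_coef_size mA sA) //; lia.
  by rewrite nth_default // sA; lia.
have -> : 'X^r * drop_poly p.+1 A
    = 'X^(r - p.+1) * A - 'X^(r - p.+1) * take_poly p.+1 A.
  rewrite -[X in _ = _ * X - _](poly_take_drop p.+1 A) -[in LHS](subnK rp) exprD.
  by move: ('X^(r - p.+1)) ('X^(p.+1)) (take_poly _ _) (drop_poly _ _) => a b c d; ring.
have sT : (size ('X^(r - p.+1) * take_poly p.+1 A)%R <= n.-1)%N.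
  apply: leq_trans (size_polyMleq _ _) _; rewrite size_polyXn.
  by have := size_take_poly p.+1 A; move: (size _) => a; lia.
rewrite tauB tau_mull sub0r tau_small ?nth_default ?oppr0 //;
  last exact: leq_trans sT (leq_pred n).
by rewrite ltn_eqF.
Qed.

Definition hankel_seq C k := tau ('X^k * C).

Lemma hankel_seq_annihilates C m : annihilates n A (hankel_seq C) m.
Proof.
move=> k _.
have : \sum_(j < n.+1) A`_j * hankel_seq C (k + j) = 0.
  transitivity (tau ('X^k * C * A)); last exact: tau_mull.
  rewrite -[X in _ * X](sum_coefX (eq_leq sA)) mulr_sumr tau_sum; apply: eq_bigr => j _.
  by rewrite -scalerAr tauZ /hankel_seq exprD mulrAC.
rewrite big_ord_recr /= (monic_coef_size mA sA) mul1r => /eqP.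
by rewrite addrC addr_eq0 => /eqP.
Qed.

Definition seq_interp (s : nat -> R) := \sum_(p < n) s p *: drop_poly p.+1 A.

Lemma hankel_seq_interp s r : (r < n)%N -> hankel_seq (seq_interp s) r = s r.
Proof.
move=> hr; rewrite /hankel_seq /seq_interp mulr_sumr tau_sum.
rewrite (bigD1 (Ordinal hr)) //= big1 ?addr0.
  by rewrite -scalerAr tauZ tau_XnM_drop // eqxx mulr1.
move=> p hp; rewrite -scalerAr tauZ tau_XnM_drop //.
by rewrite (_ : (p == r :> nat) = false) ?mulr0 //; apply/negbTE; rewrite -val_eqE in hp.
Qed.

Lemma hankel_seq_realize s : annihilates n A s n ->
  exists C, forall k, (k < n + n)%N -> hankel_seq C k = s k.
Proof.
move=> hs; exists (seq_interp s); elim/ltn_ind => k IH hk.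
case: (ltnP k n) => hkn; first exact: hankel_seq_interp.
rewrite -(subnK hkn) (hankel_seq_annihilates _ (ltnSn _)) hs; last by lia.
congr (- _); apply: eq_bigr => j _; rewrite IH //; have := ltn_ord j; lia.
Qed.

Lemma small_eq0_of_tau_XnM E : (size E <= n)%N ->
  (forall k, (k < n)%N -> tau ('X^k * E) = 0) -> E = 0.
Proof.
move=> sE hE; apply/eqP; apply/negPn/negP => E0.
(* the shift k = n - size E moves the leading coefficient of E to X^(n-1) *)
have d0 : (0 < size E)%N by rewrite size_poly_gt0.
have hk : (n - size E < n)%N by lia.
have := hE _ hk.
rewrite tau_small; last first.
  by rewrite size_monicM ?monicXn // size_polyXn; move: d0 sE; move: (size E) => d; lia.
rewrite coefXnM ltnNge (_ : (n - size E <= n.-1)%N) /=; last first.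
  by move: d0 sE; move: (size E) => d; lia.
rewrite (_ : (n.-1 - (n - size E) = (size E).-1)%N); last first.
  by move: d0 sE; move: (size E) => d; lia.
by move=> /eqP; rewrite -/(lead_coef E) lead_coef_eq0 (negbTE E0).
Qed.

Lemma rdivp_eq_of_tau_XnM D : (forall k, (k < n)%N -> tau ('X^k * D) = 0) ->
  D = rdivp D A * A.
Proof.
move=> hD; suff r0 : rmodp D A = 0 by rewrite {1}(rdivp_eq mA D) r0 addr0.
apply: small_eq0_of_tau_XnM => [|k hk].
  by have := ltn_rmodpN0 D (monic_neq0 mA); rewrite sA ltnS.
by rewrite -(hD k hk) {2}(rdivp_eq mA D) mulrDr addrC mulrA tau_add_mull.
Qed.

Lemma bezout_of_hankel_unit C : hankel_mx n (hankel_seq C) \in unitmx ->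
  exists B W, (size B <= n)%N /\ B * C = 1 + W * A.
Proof.
(* B is chosen so that tau(X^k (B C - 1)) = 0 for all k < n *)
move=> Hu; pose e := \col_(p < n) tau 'X^p.
pose b := invmx (hankel_mx n (hankel_seq C)) *m e.
pose B := \sum_(q < n) b q 0 *: 'X^q.
exists B, (rdivp (B * C - 1) A); split; first exact: size_sumX.
suff eBC : B * C - 1 = rdivp (B * C - 1) A * A by rewrite -eBC addrC subrK.
apply: rdivp_eq_of_tau_XnM => k hk.
rewrite mulrBr tauB mulr1; apply/eqP; rewrite subr_eq0.
have := congr1 (fun M : 'cV[R]_n => M (Ordinal hk) ord0) (mulKVmx Hu e).
rewrite !mxE => <-; rewrite /B mulr_suml mulr_sumr tau_sum; apply/eqP.
apply: eq_bigr => q _.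
by rewrite hankel_mxE -scalerAl -scalerAr tauZ mulrA -exprD mulrC.
Qed.

Lemma Bez_mul_hankel B C W : (size B <= n)%N -> B * C = 1 + W * A ->
  Bez n A B *m hankel_mx n (hankel_seq C) = 1%:M.
Proof.
(* modulo A, bez_row A B p * C is drop_poly p.+1 A, on whose shifts tau is a
   Kronecker delta *)
move=> sB hBC; apply/matrixP => p r; rewrite !mxE.
under eq_bigr => q _ do rewrite !mxE coef_bez_quot -tauZ.
rewrite -tau_sum.
have -> : \sum_(i < n) (bez_row A B p)`_i *: ('X^(i + r) * C)
          = bez_row A B p * ('X^r * C).
  rewrite -[in RHS](sum_coefX (size_bez_row sA sB (ltn_ord p))) mulr_suml.
  by apply: eq_bigr => i _; rewrite -scalerAl exprD mulrA.
have -> : bez_row A B p * ('X^r * C) = 'X^r * drop_poly p.+1 A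
    + (W * ('X^r * drop_poly p.+1 A) - 'X^r * C * drop_poly p.+1 B) * A.
  rewrite /bez_row; move: ('X^r) (drop_poly p.+1 A) (drop_poly p.+1 B) => a b c.
  transitivity ((B * C) * (a * b) - A * c * (a * C)); first ring.
  by rewrite hBC; ring.
by rewrite tau_add_mull tau_XnM_drop.
Qed.

End ResidueForm.

Section Sylvester.
Variable R : comUnitRingType.
Variable n : nat.
Implicit Types A B C Q T U V W : {poly R}.

Definition uv_row U V : 'rV[R]_(n + n) :=
  \row_k match split k with inl i => U`_i | inr i => V`_i end.

Lemma uv_row_mul_sylv A B U V : (size U <= n)%N -> (size V <= n)%N ->
  uv_row U V *m sylv_nn n A B = \row_j (A * U + B * V)`_j.
Proof.
move=> hU hV; apply/rowP => j; rewrite !mxE big_split_ord /=.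
rewrite -[U in RHS](sum_coefX hU) -[V in RHS](sum_coefX hV) !mulr_sumr coefD !coef_sum.
congr (_ + _); apply: eq_bigr => i _.
  by rewrite /uv_row /sylv_nn !mxE (unsplitK (inl _ i)) -scalerAr coefZ [A * _]mulrC.
by rewrite /uv_row /sylv_nn !mxE (unsplitK (inr _ i)) -scalerAr coefZ [B * _]mulrC.
Qed.

Lemma size_lincomb_leq A B U V : (size A <= n.+1)%N -> (size B <= n.+1)%N ->
  (size U <= n)%N -> (size V <= n)%N -> (size (A * U + B * V)%R <= n + n)%N.
Proof.
move=> hA hB hU hV; apply: leq_trans (size_polyD _ _) _; rewrite geq_max.
apply/andP; split; apply: leq_trans (size_polyMleq _ _) _.
  by move: hA hU; move: (size A) (size U) => a b; lia.
by move: hB hV; move: (size B) (size V) => a b; lia.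
Qed.

Definition sylv_onto A B := forall T, (size T <= n + n)%N ->
  exists U V, [/\ (size U <= n)%N, (size V <= n)%N & A * U + B * V = T].

Lemma sylv_onto_of_res_unit A B : (size A <= n.+1)%N -> (size B <= n.+1)%N ->
  res_nn n A B \is a GRing.unit -> sylv_onto A B.
Proof.
move=> sA sB hr T hT.
have Mu : sylv_nn n A B \in unitmx by rewrite unitmxE.
pose x := \row_(j < n + n) T`_j *m invmx (sylv_nn n A B).
pose U := \sum_(i < n) x 0 (lshift n i) *: 'X^i.
pose V := \sum_(i < n) x 0 (rshift n i) *: 'X^i.
have sU : (size U <= n)%N := size_sumX _.
have sV : (size V <= n)%N := size_sumX _.
have ex : uv_row U V = x.
  apply/rowP => k; rewrite mxE -[k in RHS]splitK.
  by case: (split k) => i /=; rewrite coef_sumX.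
exists U, V; split => //; apply/polyP => j.
case: (ltnP j (n + n)) => hj; last first.
  rewrite !nth_default //; first exact: leq_trans hT hj.
  exact: leq_trans (size_lincomb_leq sA sB sU sV) hj.
have := congr1 (fun r : 'rV_(n + n) => r 0 (Ordinal hj)) (uv_row_mul_sylv A B sU sV).
by rewrite ex mulmxKV // !mxE.
Qed.

Lemma res_unit_of_sylv_onto A B : sylv_onto A B -> res_nn n A B \is a GRing.unit.
Proof.
move=> hs.
have f (i : 'I_(n + n)) : {UV : {poly R} * {poly R} |
    [/\ (size UV.1 <= n)%N, (size UV.2 <= n)%N & A * UV.1 + B * UV.2 = 'X^i]}.
  apply: constructive_indefinite_description.
  have [|U [V [h1 h2 h3]]] := hs 'X^i; first by rewrite size_polyXn.
  by exists (U, V).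
pose X := \matrix_(i < n + n) uv_row (sval (f i)).1 (sval (f i)).2.
have XM : X *m sylv_nn n A B = 1%:M.
  apply/row_matrixP => i; rewrite row_mul rowK row1.
  case: (svalP (f i)) => h1 h2 h3; rewrite uv_row_mul_sylv // h3.
  by apply/rowP => j; rewrite !mxE coefXn eqxx.
by have [_] := mulmx1_unit XM; rewrite unitmxE.
Qed.

Lemma bezout_sylv_onto A B C W : A \is monic -> size A = n.+1 ->
  (size B <= n)%N -> B * C = 1 + W * A -> sylv_onto A B.
Proof.
move=> mA sA sB hBC T hT.
set q := rdivp (T * C) A; set r := rmodp (T * C) A.
have sr : (size r <= n)%N.
  by have := ltn_rmodpN0 (T * C) (monic_neq0 mA); rewrite sA ltnS.
set U := B * q - T * W.
have eT : A * U + B * r = T.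
  have eTC : T * C = q * A + r by rewrite /q /r -rdivp_eq.
  have e : T = T * (B * C) - T * W * A by rewrite hBC; ring.
  rewrite [RHS]e; transitivity (B * (q * A + r) - T * W * A); first by rewrite /U; ring.
  by rewrite -eTC; ring.
exists U, r; split => //.
have hAU : (size (A * U)%R <= n + n)%N.
  rewrite (_ : A * U = T - B * r); last by rewrite -eT addrK.
  apply: size_polyB_leq => //; apply: leq_trans (size_polyMleq _ _) _.
  by move: sB sr; move: (size B) (size r) => a b; lia.
have [->|U0] := eqVneq U 0; first by rewrite size_poly0.
by move: hAU; rewrite size_monicM // sA; move: (size U) => a; lia.
Qed.

Lemma bezout_uniq A B C W U V : A \is monic -> size A = n.+1 ->
  B * C = 1 + W * A -> (size U <= n)%N -> (size V <= n)%N ->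
  A * U + B * V = 0 -> U = 0 /\ V = 0.
Proof.
move=> mA sA hBC hU hV h.
have eBV : B * V = - (A * U) by apply/eqP; rewrite -addr_eq0 addrC h.
have V0 : V = 0.
  have eV : V = - (C * U + V * W) * A.
    have e : V = V * (B * C) - V * W * A by rewrite hBC; ring.
    rewrite {1}e; transitivity (C * (B * V) - V * W * A); first ring.
    by rewrite eBV; ring.
  have F0 : - (C * U + V * W) = 0 by apply: (mul_monic_small_eq0 mA sA); rewrite -eV.
  by rewrite eV F0 mul0r.
split => //; move: h; rewrite V0 mulr0 addr0 => h.
by apply: (mul_monic_small_eq0 mA sA); rewrite mulrC h size_poly0.
Qed.

Lemma inverse_mod_uniq A B B' C C' W W' Q : A \is monic -> size A = n.+1 ->
  (size B <= n)%N -> (size B' <= n)%N ->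
  B * C = 1 + W * A -> B' * C' = 1 + W' * A -> C - C' = Q * A -> B = B'.
Proof.
move=> mA sA sB sB' hBC hBC' eC.
have eB : B - B' = (B' * W - B * W' - B * B' * Q) * A.
  transitivity (B * (B' * C') - B' * (B * C) - B * W' * A + B' * W * A).
    by rewrite hBC hBC'; ring.
  transitivity (- (B * B' * (C - C')) - B * W' * A + B' * W * A); first ring.
  by rewrite eC; ring.
have F0 : B' * W - B * W' - B * B' * Q = 0.
  by apply: (mul_monic_small_eq0 mA sA); rewrite -eB size_polyB_leq.
by apply/eqP; rewrite -subr_eq0 eB F0 mul0r.
Qed.

End Sylvester.

Section PairsOfPolynomials.
Variable R : comUnitRingType.
Variable n : nat.
Hypothesis n_gt0 : (0 < n)%N.
Implicit Types A B C U V W : {poly R}.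

Lemma inF_bezout A B : inF n A B -> exists C W, B * C = 1 + W * A.
Proof.
case=> _ sA sB hr.
have hs := sylv_onto_of_res_unit (eq_leq sA) (leq_trans sB (leqnSn n)) hr.
have [|U [C [_ _ h]]] := hs 1.
  by rewrite size_poly1; lia.
by exists C, (- U); rewrite -h; ring.
Qed.

Lemma inF_of_bezout A B C W : A \is monic -> size A = n.+1 -> (size B <= n)%N ->
  B * C = 1 + W * A -> inF n A B.
Proof.
move=> mA sA sB hBC; split => //.
by apply/res_unit_of_sylv_onto/(bezout_sylv_onto mA sA sB hBC).
Qed.

Lemma UV1_spec_lead A B U V : A \is monic -> size A = n.+1 -> (size B <= n)%N ->
  (size U <= n)%N -> (size V <= n)%N -> A * U + B * V = 'X^((n + n).-1) ->
  U`_n.-1 = 1.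
Proof.
move=> mA sA sB sU sV h.
have := congr1 (fun p : {poly R} => p`_((n + n).-1)) h => /=.
rewrite coefXn eqxx coefD [(B * V)`__]nth_default; last first.
  apply: leq_trans (size_polyMleq _ _) _.
  by move: sB sV; move: (size B) (size V) => a b; lia.
rewrite -[A](subrK 'X^n) mulrDl coefD [(_ * U)`__]nth_default; last first.
  apply: leq_trans (size_polyMleq _ _) _.
  have sAX : (size (A - 'X^n)%R <= n)%N.
    apply/leq_sizeP => j hj; rewrite coefB coefXn.
    case: (ltngtP j n) => hjn; first by lia.
      by rewrite nth_default ?subr0 // sA.
    by rewrite hjn (monic_coef_size mA sA) subrr.
  by move: sAX sU; move: (size (A - _)) (size U) => a b; lia.
rewrite coefXnM ifF; last by apply/negbTE; rewrite -leqNgt; lia.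
by rewrite add0r addr0 (_ : ((n + n).-1 - n = n.-1)%N) //; lia.
Qed.

Lemma UV1P A B : inF n A B -> UV1_spec n A B (UV1 n A B).
Proof.
move=> [mA sA sB hr]; rewrite /UV1; apply: epsilon_spec.
have hs := sylv_onto_of_res_unit (eq_leq sA) (leq_trans sB (leqnSn n)) hr.
have [|U [V [hU hV h]]] := hs 'X^((n + n).-1).
  by rewrite size_polyXn; lia.
exists (U, V); split => //=; apply/eqP; rewrite eqn_leq hU /=.
have := UV1_spec_lead mA sA sB hU hV h.
case: (ltnP (size U) n) => // hlt; rewrite nth_default; last first.
  by move: hlt; move: (size U) => a; lia.
by move/eqP; rewrite eq_sym oner_eq0.
Qed.

Lemma UV1_uniq A B U V : inF n A B -> UV1_spec n A B (U, V) -> UV1 n A B = (U, V).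
Proof.
move=> hF [/= hU hV h].
have [/= hU1 hV1 h1] := UV1P hF.
have [C [W hBC]] := inF_bezout hF.
case: hF => mA sA sB hr.
have [||| /eqP e1 /eqP e2] :=
  bezout_uniq (U := (UV1 n A B).1 - U) (V := (UV1 n A B).2 - V) mA sA hBC.
- by apply: size_polyB_leq; rewrite ?hU ?hU1.
- exact: size_polyB_leq.
- by rewrite !mulrBr addrACA -opprD h1 h subrr.
move: e1 e2; rewrite !subr_eq0 => /eqP <- /eqP <-.
by case: (UV1 n A B).
Qed.

Lemma Hank_hankel A B C W : A \is monic -> size A = n.+1 -> (size B <= n)%N ->
  B * C = 1 + W * A ->
  Hank n A B = hankel_mx n (hankel_seq n A C) /\
  hankel_mx n (hankel_seq n A C) \in unitmx.
Proof.
move=> mA sA sB hBC; have e := Bez_mul_hankel mA sA sB hBC.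
have [Bu Hu] := mulmx1_unit e.
by split => //; rewrite /Hank -[RHS](mulKmx Bu) e mulmx1.
Qed.

Lemma phi_hankel_seq A B C W : inF n A B -> B * C = 1 + W * A ->
  phi n A B = - hankel_seq n A C (n + n).-1.
Proof.
move=> hF hBC; have [hU hV h] := UV1P hF.
case: hF => mA sA sB _; rewrite /phi /hankel_seq -h.
have -> : (A * (UV1 n A B).1 + B * (UV1 n A B).2) * C
    = (UV1 n A B).2 + ((UV1 n A B).2 * W + (UV1 n A B).1 * C) * A.
  move: ((UV1 n A B).1) ((UV1 n A B).2) => u v.
  transitivity (v * (B * C) + A * u * C); first ring.
  by rewrite hBC; ring.
by rewrite tau_add_mull ?tau_small.
Qed.

End PairsOfPolynomials.

Section HankPhiMap.
Variable R : comUnitRingType.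
Variable n : nat.
Hypothesis n_gt0 : (0 < n)%N.
Implicit Types A B : {poly R}.

Lemma Hank_inH A B : inF n A B -> inH (Hank n A B).
Proof.
move=> hF; have [C [W hBC]] := inF_bezout n_gt0 hF; case: hF => mA sA sB _.
by have [-> /hankel_mx_inH] := Hank_hankel mA sA sB hBC.
Qed.

Lemma Hank_phi_inj A B A' B' : inF n A B -> inF n A' B' ->
  Hank n A B = Hank n A' B' -> phi n A B = phi n A' B' -> A = A' /\ B = B'.
Proof.
move=> hF hF' eH eP.
have [C [W hBC]] := inF_bezout n_gt0 hF.
have [C' [W' hBC']] := inF_bezout n_gt0 hF'.
rewrite (phi_hankel_seq n_gt0 hF hBC) (phi_hankel_seq n_gt0 hF' hBC') in eP.
case: hF => mA sA sB _; case: hF' => mA' sA' sB' _.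
have [eH1 Hu] := Hank_hankel mA sA sB hBC.
have [eH2 _] := Hank_hankel mA' sA' sB' hBC'.
have es k : (k < n + n)%N -> hankel_seq n A C k = hankel_seq n A' C' k.
  move=> hk; case: (ltnP k (n + n).-1) => hk2.
    by apply: hankel_mx_inj hk2; rewrite -eH1 -eH2.
  by rewrite (_ : k = (n + n).-1); [exact: oppr_inj | lia].
have eA : A = A'.
  apply: (monic_annihilator_uniq mA sA mA' sA' Hu).
    exact: (hankel_seq_annihilates mA sA C (m := n)).
  apply: eq_annihilates (hankel_seq_annihilates mA' sA' C' (m := n)) => k hk.
  by rewrite es //; lia.
subst A'; split => //.
apply: (inverse_mod_uniq mA sA sB sB' hBC hBC' (rdivp_eq_of_tau_XnM mA sA _)) => k hk.
by rewrite mulrBr tauB // -!/(hankel_seq _ _ _ _) es ?subrr //; lia.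
Qed.

Lemma Hank_phi_surj (H : 'M[R]_n) c : inH H ->
  exists A B, [/\ inF n A B, Hank n A B = H & phi n A B = c].
Proof.
case=> _ Hu /is_hankelE eH.
pose s k := if k == (n + n).-1 then - c else hankel_diag H k.
have eHs : H = hankel_mx n s.
  by rewrite {1}eH; apply: eq_hankel_mx => k hk; rewrite /s ltn_eqF.
rewrite eHs in Hu.
have [A [mA sA annA]] := monic_annihilator_exists Hu.
have [C eC] := hankel_seq_realize mA sA annA.
have eHC : hankel_mx n (hankel_seq n A C) = H.
  by rewrite eHs; apply: eq_hankel_mx => k hk; apply: eC; lia.
have HCu : hankel_mx n (hankel_seq n A C) \in unitmx by rewrite eHC eHs.
have [B [W [sB hBC]]] := bezout_of_hankel_unit mA sA HCu.
have hF := inF_of_bezout mA sA sB hBC.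
exists A, B; split => //; first by have [-> _] := Hank_hankel mA sA sB hBC.
rewrite (phi_hankel_seq n_gt0 hF hBC) eC; last by lia.
by rewrite /s eqxx opprK.
Qed.

Lemma inF_shift A B h : inF n A B -> inF n (A + h%:P * B) B.
Proof.
move=> hF; have [C [W hBC]] := inF_bezout n_gt0 hF; case: hF => mA sA sB _.
have sh : (size (h%:P * B)%R < size A)%N by rewrite sA ltnS size_polyCM_leq.
apply: (inF_of_bezout (C := C + W * h%:P) (W := W)) => //.
- by rewrite monicE lead_coefDl // -monicE.
- by rewrite size_polyDl.
- by rewrite mulrDr hBC; ring.
Qed.

Lemma Hank_shift A B h : Hank n (A + h%:P * B) B = Hank n A B.
Proof. by rewrite /Hank /Bez /bez_quot bez_num_shift. Qed.

Lemma phi_shift A B h : inF n A B -> phi n (A + h%:P * B) B = phi n A B + h.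
Proof.
move=> hF; have [hU hV e] := UV1P n_gt0 hF.
have l : (UV1 n A B).1`_n.-1 = 1.
  by case: hF => mA sA sB _; apply: (UV1_spec_lead n_gt0 mA sA sB (eq_leq hU) hV e).
set U := (UV1 n A B).1; set V := (UV1 n A B).2.
rewrite /phi (@UV1_uniq _ _ n_gt0 _ _ U (V - h%:P * U) (inF_shift h hF)) /=.
  by rewrite coefB coefCM l mulr1 opprB addrC.
split => //=; first exact: size_polyB_leq (size_polyCM_leq _ (eq_leq hU)).
by rewrite -e; ring.
Qed.

End HankPhiMap.

Theorem propositionC5 (k : fieldType) (R : comUnitAlgType k) (n : nat) :
  (0 < n)%N ->
  [/\ (* Hank_n x phi_n maps F_n(R) into H_n(R) x A^1(R) *)
      (forall A B : {poly R}, inF n A B -> inH (Hank n A B)),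
      (* injective on F_n(R) *)
      (forall A B A' B' : {poly R}, inF n A B -> inF n A' B' ->
         Hank n A B = Hank n A' B' -> phi n A B = phi n A' B' ->
         A = A' /\ B = B'),
      (* surjective onto H_n(R) x A^1(R) *)
      (forall (H : 'M[R]_n) (c : R), inH H ->
         exists A B : {poly R}, [/\ inF n A B, Hank n A B = H & phi n A B = c]),
      (* the G_a-action h . A/B = (A + hB)/B preserves F_n(R) *)
      (forall (A B : {poly R}) (h : R), inF n A B -> inF n (A + h%:P * B) B) &
      (* G_a-equivariance: trivial action on H_n, translation on A^1 *)
      (forall (A B : {poly R}) (h : R), inF n A B ->
         Hank n (A + h%:P * B) B = Hank n A B /\
         phi n (A + h%:P * B) B = phi n A B + h)].
Proof.
move=> n_gt0; split.
- exact: Hank_inH.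
- exact: Hank_phi_inj.
- exact: Hank_phi_surj.
- by move=> A B h; apply: inF_shift.
- by move=> A B h hF; rewrite Hank_shift phi_shift.
Qed.
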